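(* Let $k$ be a positive integer and let $p>k(k+1)$ be a positive integer. Then for every integer $n$ there is an integer $m$ with $\mathbf r_k\!\left(\tfrac{n}{k+1}\right)=\mathbf r_k\!\left(\tfrac{m}{p}\right)$; that is, $\mathbf r_k\!\left(\tfrac1{k+1}\mathbb{Z}\right)\subseteq\mathbf r_k\!\left(\tfrac1p\mathbb{Z}\right)$.
   Context: For $x\in\mathbb{R}$, $\{x\}=x-\lfloor x\rfloor$ is the fractional part, and for $t\in\mathbb{R}$, $\mathbf r_k(t):=\big(\lfloor (k+1)\{t\}\rfloor,\lfloor (k+1)\{2t\}\rfloor,\ldots,\lfloor (k+1)\{kt\}\rfloor\big)\in\{0,\ldots,k\}^k$. *)

From mathcomp Require Import all_boot all_order all_algebra.
From mathcomp Require Import reals.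
Set Implicit Arguments. Unset Strict Implicit. Unset Printing Implicit Defensive.
Import Order.TTheory GRing.Theory Num.Theory.
Local Open Scope ring_scope.

Definition fracp {R : realType} (x : R) : R := x - (Num.floor x)%:~R.

Definition rvec {R : realType} (k : nat) (t : R) : seq int :=
  [seq Num.floor ((k.+1)%:R * fracp (j%:R * t)) | j <- iota 1 k].

From mathcomp Require Import all_boot all_order all_algebra.
From mathcomp Require Import reals.
From mathcomp Require Import ring lra zify.
Import Order.TTheory GRing.Theory Num.Theory.
Local Open Scope ring_scope.

(* The coordinates of r_k(t) only see, for j <= k, in which of the k+1 cells
   [r/(k+1), (r+1)/(k+1)) the fractional part {jt} lies. At t = n/(k+1) each
   {jt} sits at the left end of its cell, so moving t to the right by d with
   k(k+1) d < 1 keeps every {jt} in its cell. Rounding p n/(k+1) up to an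
   integer m gives m/p = n/(k+1) + d with 0 <= d < 1/p, and p > k(k+1) makes
   this shift small enough. *)

Section FractionalPart.
Variable R : realType.

Lemma fracp_intrDl (q : int) (y : R) : fracp (q%:~R + y) = fracp y.
Proof. by rewrite /fracp floorDzr ?intr_int // intrKfloor intrD opprD addrACA subrr add0r. Qed.

Lemma fracp_id (y : R) : 0 <= y < 1 -> fracp y = y.
Proof. by move=> y01; rewrite /fracp (floor_def (m := 0)) ?subr0 // add0r. Qed.

Lemma intr_divz_split (N : nat) (z : int) : (0 < N)%N ->
  z%:~R / N%:R = (z %/ N)%Z%:~R + (z %% N)%Z%:~R / N%:R :> R.
Proof.
move=> N0; have N0' : N%:R != 0 :> R by rewrite pnatr_eq0 -lt0n.
by rewrite {1}(intdiv.divz_eq z N) intrD intrM mulrDl mulfK.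
Qed.

Lemma floor_mul_fracp_cell (N : nat) (q r : int) (e : R) :
  0 <= r < N%:Z -> 0 <= e -> N%:R * e < 1 ->
  Num.floor (N%:R * fracp (q%:~R + r%:~R / N%:R + e)) = r.
Proof.
move=> /andP[r0 rN] e0 Ne1.
have N0 : 0 < N%:R :> R by rewrite ltr0n; lia.
have rN' : r%:~R + 1 <= N%:R :> R.
  by rewrite -[N%:R]/(N%:Z%:~R) -[1]/(1%:~R) -intrD ler_int; lia.
have r0' : 0 <= r%:~R :> R by rewrite ler0z.
have scale : N%:R * (r%:~R / N%:R + e) = r%:~R + N%:R * e.
  by rewrite mulrDr mulrCA divff ?mulr1 // lt0r_neq0.
rewrite -addrA fracp_intrDl fracp_id; last first.
  rewrite -(pmulr_rge0 _ N0) -(ltr_pM2l N0) scale mulr1.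
  apply/andP; split; [apply: addr_ge0 => //; exact: mulr_ge0 (ltW N0) e0 | lra].
rewrite scale; apply: floor_def; rewrite intrD; apply/andP; split.
- by rewrite lerDl mulr_ge0 // ltW.
- by rewrite ltrD2l.
Qed.

Lemma ceil_mul_approx (p : nat) (x : R) : (0 < p)%N ->
  0 <= (Num.ceil (p%:R * x))%:~R / p%:R - x < p%:R^-1.
Proof.
move=> p0; have p0' : 0 < p%:R :> R by rewrite ltr0n.
have /andP[lo hi] := ceil_itv (p%:R * x).
rewrite intrB -[1%:~R]/(1 : R) in lo.
set c := (Num.ceil _)%:~R in lo hi *.
have -> : c / p%:R - x = (c - p%:R * x) / p%:R by field; rewrite lt0r_neq0.
rewrite divr_ge0 ?subr_ge0 ?(ltW p0') //= -[X in _ < X]mul1r ltr_pM2r ?invr_gt0 //.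
lra.
Qed.

Lemma rvec_shift (k : nat) (n : int) (d : R) :
  0 <= d -> (k * k.+1)%:R * d < 1 ->
  rvec k (n%:~R / (k.+1)%:R + d) = rvec k (n%:~R / (k.+1)%:R : R).
Proof.
move=> d0 dsmall; apply/eq_in_map => j; rewrite mem_iota => /andP[j1 j2].
have jk : (j <= k)%N by lia.
have cell : j%:R * (n%:~R / (k.+1)%:R) =
    ((j%:Z * n) %/ k.+1)%Z%:~R + ((j%:Z * n) %% k.+1)%Z%:~R / (k.+1)%:R :> R.
  by rewrite -intr_divz_split // mulrA intrM.
have r_bounds : (0 <= (j%:Z * n) %% k.+1 < (k.+1)%:Z)%Z.
  by rewrite modz_ge0 // ltz_pmod.
have jd : (k.+1)%:R * (j%:R * d) < 1.
  apply: le_lt_trans dsmall; rewrite mulrA -natrM mulnC ler_wpM2r //.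
  by rewrite ler_nat leq_mul2r jk orbT.
rewrite [_ * (_ + d)]mulrDr cell floor_mul_fracp_cell //; last by rewrite mulr_ge0.
by rewrite -[in RHS](addr0 (_ + _)) floor_mul_fracp_cell // mulr0.
Qed.

End FractionalPart.

Theorem mainTheorem11 (R : realType) (k p : nat) :
  (0 < k)%N -> (k * k.+1 < p)%N ->
  forall n : int, exists m : int,
    rvec k (n%:~R / (k.+1)%:R : R) = rvec k (m%:~R / p%:R : R) :> seq int.
Proof.
move=> _ kp n; have p0 : (0 < p)%N by lia.
set t : R := n%:~R / (k.+1)%:R.
exists (Num.ceil (p%:R * t)).
have /andP[d0 dp] := @ceil_mul_approx R p t p0.
set d := _ - t in d0 dp.
have dsmall : (k * k.+1)%:R * d < 1.
  apply: (@le_lt_trans _ _ (p%:R * d)); first by rewrite ler_wpM2r // ler_nat ltnW.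
  by rewrite -[X in _ < X](@mulfV _ p%:R) ?pnatr_eq0 -?lt0n // ltr_pM2l ?ltr0n.
by rewrite -(@rvec_shift R k n d d0 dsmall) /d addrC subrK.
Qed.
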